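(* Let $G$ be a graph obtained by taking a disjoint union of complete graphs $K_{n_1}\cup\cdots\cup K_{n_\ell}$ with each $n_i\ge 2$ and adding edges between distinct cliques such that the added edges form a matching. Then $G$ is well-bicovered.
   Context: All graphs are finite and simple; ''subgraph'' means induced subgraph. A graph is well-bicovered if every vertex-inclusion-maximal induced bipartite subgraph has the same order. *)

(* A simple graph on a finite vertex type T is a symmetric
   irreflexive relation e : rel T. "Subgraph" = induced subgraph, determined
   by its vertex set S : {set T}. *)
From mathcomp Require Import all_boot.
Set Implicit Arguments. Unset Strict Implicit. Unset Printing Implicit Defensive.

Definition simple_graph (T : finType) (e : rel T) : Prop :=
  symmetric e /\ irreflexive e.

Definition independent (T : finType) (e : rel T) (A : {set T}) : bool :=
  [forall x in A, forall y in A, ~~ e x y].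

Definition ind_bipartite (T : finType) (e : rel T) (S : {set T}) : bool :=
  [exists A : {set T}, (A \subset S) && independent e A && independent e (S :\: A)].

Definition well_bicovered (T : finType) (e : rel T) : Prop :=
  forall S1 S2 : {set T},
    maxset (ind_bipartite e) S1 -> maxset (ind_bipartite e) S2 -> #|S1| = #|S2|.

(* e is obtained from a disjoint union of cliques (the blocks of P), each of
   size >= 2, by adding edges between distinct cliques that form a matching.
   (Edges only exist inside blocks or as the added matching edges.) *)
Definition cliques_plus_matching (T : finType) (e : rel T) : Prop :=
  exists P : {set {set T}},
    [/\ partition P [set: T],
        (forall B, B \in P -> 2 <= #|B|),
        (forall x y, pblock P x = pblock P y -> x != y -> e x y) &
        (forall x y z, e x y -> e x z ->
           pblock P x != pblock P y -> pblock P x != pblock P z -> y = z)].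

From mathcomp Require Import all_boot.
Set Implicit Arguments. Unset Strict Implicit. Unset Printing Implicit Defensive.

(* A maximal induced bipartite subgraph S meets every clique in exactly two
   vertices.  At most two, since three vertices of a clique form a triangle.
   At least two: if S meets every clique in at most two vertices, then inside
   S the clique edges and the added edges form two matchings, and a union of
   two matchings has no odd cycle, so S is bipartite; hence a clique meeting S
   in fewer than two vertices would let S grow.  So |S| = 2l for every
   maximal S. *)

Section TwoColouring.

Variable T : finType.
Implicit Types (S X : {set T}) (r : rel T) (c : T -> bool).

Definition matching_on S r :=
  {in S & S & S, forall a b b', a != b -> a != b' -> r a b -> r a b' -> b = b'}.

Definition proper_colouring S r c :=
  {in S &, forall a b, a != b -> r a b -> c a != c b}.

Definition two_colourable S r := exists c, proper_colouring S r c.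

Lemma matching_onS S S' r : S' \subset S -> matching_on S r -> matching_on S' r.
Proof. by move=> /subsetP sS' m a b b' /sS' aS /sS' bS /sS' b'S; apply: m. Qed.

Lemma proper_colouring_subrel S r r' c :
  subrel r r' -> proper_colouring S r' c -> proper_colouring S r c.
Proof. by move=> rr' c_ok a b aS bS ab /rr'; apply: c_ok. Qed.

Lemma proper_colouring_glue S X r c c' :
    symmetric r -> proper_colouring (S :\: X) r c -> {in S :\: X, c' =1 c} ->
    {in X & S, forall a b, a != b -> r a b -> c' a != c' b} ->
  proper_colouring S r c'.
Proof.
move=> r_sym c_ok cc' X_ok a b aS bS ab rab.
have [aX|aX] := boolP (a \in X); first exact: X_ok.
have [bX|bX] := boolP (b \in X); first by rewrite eq_sym X_ok // 1?eq_sym // r_sym.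
have aSX : a \in S :\: X by rewrite inE aX.
have bSX : b \in S :\: X by rewrite inE bX.
by rewrite !cc' //; apply: c_ok.
Qed.

Lemma exists_in_unique S (p f : pred T) y :
  y \in S -> p y -> {in S, forall z, p z -> z = y} -> [exists z in S, p z && f z] = f y.
Proof.
move=> yS py y_uniq; apply/exists_inP/idP => [[z zS /andP[pz fz]]|fy].
  by rewrite -(y_uniq z).
by exists y; rewrite ?py.
Qed.

Lemma two_colourable_delete S r1 r2 x :
    symmetric r1 -> symmetric r2 -> matching_on S r1 -> x \in S ->
    {in S, forall y, x != y -> ~~ r2 x y} ->
    two_colourable (S :\ x) (relU r1 r2) -> two_colourable S (relU r1 r2).
Proof.
move=> r1_sym r2_sym m1 xS no_r2 [c c_ok].
exists (fun v => if v == x then ~~ [exists y in S :\ x, r1 x y && c y] else c v).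
apply: proper_colouring_glue c_ok _ _ => [a b /=|v|a b]; first by rewrite r1_sym r2_sym.
  by rewrite !inE => /andP[/negbTE->].
rewrite !inE => /eqP-> {a} bS xb r_xb.
have r1xb : r1 x b.
  by case/orP: r_xb => // r2xb; move: (no_r2 b bS xb); rewrite r2xb.
have bSx : b \in S :\ x by rewrite !inE eq_sym xb.
rewrite eqxx [b == x]eq_sym (negbTE xb) (exists_in_unique _ bSx r1xb).
  by case: (c b).
by move=> z; rewrite !inE => /andP[zx zS] r1xz; apply: (m1 x); rewrite // eq_sym.
Qed.

(* Contracting the r2-edge x x': the r1-partners y of x and z of x' become
   adjacent, so a colouring c of the rest has c y != c z and extends by giving
   x the colour ~~ c y (equivalently c z) and x' the opposite one. *)
Definition contract r x x' : rel T :=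
  [rel a b | [|| r a b, r a x && r b x' | r a x' && r b x]].

Lemma contract_sym r x x' : symmetric r -> symmetric (contract r x x').
Proof.
move=> r_sym a b; rewrite /contract /= r_sym.
by rewrite [r a x && _]andbC [r a x' && _]andbC [_ || (_ && _)]orbC.
Qed.

Lemma matching_on_contract S r x x' :
    symmetric r -> matching_on S r -> x \in S -> x' \in S -> x != x' ->
  matching_on (S :\: [set x; x']) (contract r x x').
Proof.
move=> r_sym m xS x'S xx' a b b'; rewrite !inE !negb_or.
move=> /andP[/andP[ax ax'] aS] /andP[/andP[bx bx'] bS] /andP[/andP[b'x b'x'] b'S].
move=> ab ab'.
have mx := m x _ _ xS; have mx' := m x' _ _ x'S; have ma := m a _ _ aS.
case/or3P=> [rab|/andP[rax rbx']|/andP[rax' rbx]];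
case/or3P=> [rab'|/andP[rax2 rb'x']|/andP[rax'2 rb'x]].
- exact: ma.
- by case/eqP: bx; apply: ma.
- by case/eqP: bx'; apply: ma.
- by case/eqP: b'x; apply: ma.
- by apply: mx'; rewrite // 1?eq_sym // r_sym.
- by case/eqP: xx'; apply: ma.
- by case/eqP: b'x'; apply: ma.
- by case/eqP: xx'; apply: ma.
- by apply: mx; rewrite // 1?eq_sym // r_sym.
Qed.

Lemma two_colourable_contract S r1 r2 x x' :
    symmetric r1 -> symmetric r2 -> matching_on S r1 -> matching_on S r2 ->
    x \in S -> x' \in S -> x != x' -> r2 x x' ->
    two_colourable (S :\: [set x; x']) (relU (contract r1 x x') r2) ->
  two_colourable S (relU r1 r2).
Proof.
move=> r1_sym r2_sym m1 m2 xS x'S xx' r2xx' [c c_ok].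
set S' := S :\: [set x; x'].
have inS' v : v \in S' = [&& v != x, v != x' & v \in S] by rewrite !inE negb_or -andbA.
have S'P v : v \in S' -> [/\ v \in S, x != v & x' != v].
  by rewrite inS' => /and3P[vx vx' vS]; rewrite ![_ == v]eq_sym.
have partner_colours : {in S' &, forall y z, r1 x y -> r1 x' z -> c z = ~~ c y}.
  move=> y z yS' zS' r1xy r1x'z.
  have yz : y != z.
    apply/eqP => yz; subst z; have [yS xy x'y] := S'P y yS'.
    by case/eqP: xx'; apply: (m1 y); rewrite // 1?eq_sym // r1_sym.
  have := c_ok y z yS' zS' yz.
  rewrite /= /contract /= [r1 y x]r1_sym r1xy [r1 z x']r1_sym r1x'z orbT => /(_ isT).
  by case: (c y); case: (c z).
pose bx := [exists y in S', r1 x y && ~~ c y] || [exists z in S', r1 x' z && c z].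
have bx_partner_x y : y \in S' -> r1 x y -> bx = ~~ c y.
  move=> yS' r1xy; rewrite /bx (exists_in_unique _ yS' r1xy) ?orb_idr //.
    by case/exists_inP=> z zS' /andP[r1x'z cz]; rewrite -(partner_colours y z).
  move=> w /S'P[wS xw _] r1xw; have [yS xy _] := S'P y yS'; exact: (m1 x).
have bx_partner_x' z : z \in S' -> r1 x' z -> bx = c z.
  move=> zS' r1x'z; rewrite /bx (exists_in_unique _ zS' r1x'z) ?orb_idl //.
    by case/exists_inP=> y yS' /andP[r1xy ncy]; rewrite (partner_colours y z).
  move=> w /S'P[wS _ x'w] r1x'w; have [zS _ x'z] := S'P z zS'; exact: (m1 x').
exists (fun v => if v == x then bx else if v == x' then ~~ bx else c v).
apply: proper_colouring_glue (proper_colouring_subrel _ c_ok) _ _.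
- by move=> a b /=; rewrite r1_sym r2_sym.
- by move=> a b; rewrite /= /contract /= => /orP[]->; rewrite ?orbT.
- by move=> v; rewrite inS' => /and3P[/negbTE-> /negbTE->].
have x'x : x' != x by rewrite eq_sym.
move=> a b aX bS ab rab.
have [bX|bX] := boolP (b \in [set x; x']).
  move: aX bX ab; rewrite !inE => /orP[]/eqP-> /orP[]/eqP->;
  by rewrite ?eqxx ?(negbTE x'x) //= => _; case: (bx).
have bS' : b \in S' by rewrite inE bX.
have [_ xb x'b] := S'P b bS'.
have r1ab : r1 a b.
  case/orP: rab => // r2ab; move: aX; rewrite !inE => /orP[]/eqP aE; subst a.
    by case/eqP: x'b; apply: (m2 x).
  by case/eqP: xb; apply: (m2 x'); rewrite // r2_sym.
rewrite ![b == _]eq_sym (negbTE xb) (negbTE x'b).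
move: aX; rewrite !inE => /orP[]/eqP aE; subst a.
  by rewrite eqxx (bx_partner_x b); case: (c b).
by rewrite (negbTE x'x) eqxx (bx_partner_x' b); case: (c b).
Qed.

Lemma matchingU_two_colourable S r1 r2 :
    symmetric r1 -> symmetric r2 -> matching_on S r1 -> matching_on S r2 ->
  two_colourable S (relU r1 r2).
Proof.
move=> r1_sym r2_sym; have [n] := ubnP #|S|.
elim: n S r1 r1_sym => // n IHn S r1 r1_sym ltSn m1 m2.
have [->|[x xS]] := set_0Vmem S; first by exists predT => a; rewrite inE.
case: (pickP [pred x' in S | (x != x') && r2 x x']) => [x' /and3P[x'S xx' r2xx']|no_r2].
  have S'_proper : S :\: [set x; x'] \proper S.
    rewrite properEneq subsetDl andbT.
    by apply/eqP => /setP/(_ x); rewrite !inE eqxx xS.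
  apply: (two_colourable_contract r1_sym r2_sym m1 m2 xS x'S xx' r2xx').
  apply: IHn.
  - exact: contract_sym.
  - exact: leq_trans (proper_card S'_proper) ltSn.
  - exact: matching_on_contract.
  - exact: matching_onS (subsetDl _ _) m2.
apply: (two_colourable_delete r1_sym r2_sym m1 xS).
  by move=> y yS xy; have := no_r2 y; rewrite /= yS xy => /negbT.
apply: IHn => //.
- exact: leq_trans (proper_card (properD1 xS)) ltSn.
- exact: matching_onS (subsetDl _ _) m1.
- exact: matching_onS (subsetDl _ _) m2.
Qed.

End TwoColouring.

Lemma independentP (T : finType) (e : rel T) (A : {set T}) :
  reflect {in A &, forall x y, ~~ e x y} (independent e A).
Proof.
apply: (iffP forall_inP) => [indA x y xA yA | indA x xA].
  by have /forall_inP := indA x xA; apply.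
by apply/forall_inP => y; apply: indA.
Qed.

Lemma ind_bipartiteP (T : finType) (e : rel T) (S : {set T}) :
  irreflexive e -> ind_bipartite e S <-> two_colourable S e.
Proof.
move=> e_irr; split=> [|[c c_ok]].
  case/existsP=> A /andP[/andP[_ /independentP indA] /independentP indSA].
  exists (fun v => v \in A) => a b aS bS ab eab; apply/negP => /eqP abA.
  have [aA|aA] := boolP (a \in A).
    by move: eab; apply/negP/indA; rewrite // -abA.
  by move: eab; apply/negP/indSA; rewrite !inE -?abA ?aA ?aS ?bS.
pose A := [set v in S | c v].
have monochrome_indep (B : {set T}) :
    B \subset S -> {in B &, forall u v, c u = c v} -> independent e B.
  move=> /subsetP BS monoB; apply/independentP => u v uB vB.
  have [->|uv] := eqVneq u v; first by rewrite e_irr.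
  by apply/negP => /(c_ok u v (BS u uB) (BS v vB) uv); rewrite (monoB u v) ?eqxx.
have AS : A \subset S by apply/subsetP => v; rewrite inE => /andP[].
apply/existsP; exists A; rewrite AS /=; apply/andP; split; apply: monochrome_indep.
- exact: AS.
- by move=> u v; rewrite !inE => /andP[_ cu] /andP[_ cv]; rewrite cu cv.
- exact: subsetDl.
- move=> u v; rewrite !inE => /andP[cu uS] /andP[cv vS].
  by rewrite uS /= in cu; rewrite vS /= in cv; rewrite (negbTE cu) (negbTE cv).
Qed.

Lemma card_partition_setI (T : finType) (P : {set {set T}}) (D S : {set T}) :
  partition P D -> S \subset D -> #|S| = \sum_(B in P) #|S :&: B|.
Proof.
move=> partP /subsetP SD.
transitivity (\sum_(x in D | x \in S) 1).
  rewrite -sum1_card; apply: eq_bigl => x /=.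
  by case xS: (x \in S); rewrite ?andbF // SD.
rewrite (set_partition_big_cond P partP); apply: eq_bigr => B _.
by rewrite -sum1_card; apply: eq_bigl => x; rewrite inE andbC.
Qed.

Section CliquesPlusMatching.

Variables (T : finType) (e : rel T) (P : {set {set T}}).
Hypotheses (e_sym : symmetric e) (e_irr : irreflexive e).
Hypotheses (P_part : partition P [set: T]) (P_big : forall B, B \in P -> 2 <= #|B|).
Hypothesis clique_edges : forall x y, pblock P x = pblock P y -> x != y -> e x y.
Hypothesis cross_matching : forall x y z, e x y -> e x z ->
  pblock P x != pblock P y -> pblock P x != pblock P z -> y = z.

Let P_triv : trivIset P := partition_trivIset P_part.

Lemma pblock_memT x : pblock P x \in P.
Proof. by rewrite pblock_mem // (cover_partition P_part). Qed.

Lemma mem_pblockT x : x \in pblock P x.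
Proof. by rewrite mem_pblock (cover_partition P_part). Qed.

Lemma ind_bipartite_block_le2 S B :
  ind_bipartite e S -> B \in P -> #|S :&: B| <= 2.
Proof.
move=> /(ind_bipartiteP _ e_irr)[c c_ok] BP; rewrite leqNgt.
apply/card_gt2P => -[a [b [d [[aSB bSB dSB] [ab bd da]]]]].
have differ u v : u \in S :&: B -> v \in S :&: B -> u != v -> c u != c v.
  rewrite !inE => /andP[uS uB] /andP[vS vB] uv; apply: c_ok => //.
  by apply: clique_edges; rewrite // !(def_pblock P_triv BP).
move: (differ a b aSB bSB ab) (differ b d bSB dSB bd) (differ d a dSB aSB da).
by case: (c a); case: (c b); case: (c d).
Qed.

Lemma block_le2_ind_bipartite S :
  {in P, forall B, #|S :&: B| <= 2} -> ind_bipartite e S.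
Proof.
move=> S_small; apply/(ind_bipartiteP _ e_irr).
pose same := [rel x y | pblock P x == pblock P y].
pose cross := [rel x y | e x y && (pblock P x != pblock P y)].
have [c c_ok] : two_colourable S (relU same cross).
  apply: matchingU_two_colourable.
  - by move=> x y; rewrite /= eq_sym.
  - by move=> x y; rewrite /= e_sym eq_sym.
  - move=> a b b' aS bS b'S ab ab' /eqP pab /eqP pab'.
    apply/eqP; apply: contraTT (S_small _ (pblock_memT a)) => bb'.
    have inB v : v \in S -> pblock P a = pblock P v -> v \in S :&: pblock P a.
      by move=> vS ->; rewrite inE vS mem_pblockT.
    rewrite -ltnNge; apply/card_gt2P; exists a, b, b'.
    by split; [split; apply: inB | split; rewrite // eq_sym].
  - move=> a b b' aS bS b'S _ _ /andP[eab pab] /andP[eab' pab'].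
    exact: (cross_matching eab).
exists c => a b aS bS ab eab; apply: c_ok => //=.
by rewrite eab orbN.
Qed.

Lemma maxset_block_card S B :
  maxset (ind_bipartite e) S -> B \in P -> #|S :&: B| = 2.
Proof.
move=> /maxsetP[S_bip S_max] BP; apply/eqP; rewrite eqn_leq ind_bipartite_block_le2 //=.
rewrite ltnNge; apply/negP => small.
have [v vB vS] : exists2 v, v \in B & v \notin S.
  by apply/subsetPn/negP => /setIidPr SB; move: small; rewrite SB leqNgt P_big.
suff /S_max/(_ (subsetUr _ _))/setP/(_ v) : ind_bipartite e (v |: S).
  by rewrite !inE eqxx (negbTE vS).
apply: block_le2_ind_bipartite => B' B'P.
have [vB'|vB'] := boolP (v \in B').
  have -> : B' = B by rewrite -(def_pblock P_triv B'P vB') (def_pblock P_triv BP vB).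
  have sub : (v |: S) :&: B \subset v |: (S :&: B).
    by apply/subsetP => u; rewrite !inE => /andP[/orP[->|->] ->]; rewrite ?orbT.
  apply: leq_trans (subset_leq_card sub) _.
  by rewrite cardsU1 (leq_add (leq_b1 _) small).
have -> : (v |: S) :&: B' = S :&: B'.
  apply/setP => u; rewrite !inE.
  by case: eqVneq => [->|] //=; rewrite (negbTE vB') !andbF.
exact: ind_bipartite_block_le2.
Qed.

End CliquesPlusMatching.

Theorem mainTheorem14 (T : finType) (e : rel T) :
  simple_graph e -> cliques_plus_matching e -> well_bicovered e.
Proof.
move=> [e_sym e_irr] [P [P_part P_big clique_edges cross_matching]] S1 S2.
have card_maxset S : maxset (ind_bipartite e) S -> #|S| = #|P| * 2.
  move=> S_max; rewrite (card_partition_setI P_part (subsetT S)) -sum_nat_const.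
  by apply: eq_bigr => B BP; apply: (maxset_block_card e_sym e_irr P_part).
by move=> /card_maxset-> /card_maxset->.
Qed.
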